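(* There exist constants $M_{t,j}\in[0,\infty)$ ($t\in\mathcal T$, $j=1,2,3$) and $M_J\in[0,\infty)$ ($J\in\mathcal N$), depending only on the multilinear program and not on $\hat v$, such that for every indicator vector $\hat v\in\{0,1\}^{\mathcal T}$ of a proper triple set and every optimal solution $(\lambda,\mu)$ of the linear program $\mathrm{D}(\hat v)$, we have $\lambda_{t,j}\le M_{t,j}$ for all $t\in\mathcal T$, $j=1,2,3$, and $\mu_J\le M_J$ for all $J\in\mathcal N$.
   Context: A multilinear program has data $n,m$, coefficients $\alpha_i\in\mathbb{R}$ and nonempty index sets $J_i\subseteq[n]$. Let $\mathcal N=\bigcup_i\{J:\emptyset\ne J\subseteq J_i\}$ and $\beta_J=\sum_{i:J_i=J}\alpha_i$. A triple is $t=(J,J',J'')$ with $J''\in\mathcal N$, $|J''|\ge2$, $J,J'$ nonempty, disjoint, $J\cup J'=J''$, listed with $J,J'$ in lexicographic order; $\mathsf{tail1}(t)=J$, $\mathsf{tail2}(t)=J'$, $\mathsf{head}(t)=J''$; $\mathcal T$ is the set of all triples. A proper triple set is a set $T\subseteq\mathcal T$ containing a subset $T'$ such that (1) every $J_i$ with $|J_i|>1$ is the head of some triple in $T'$, and (2) whenever a set $J$ with $|J|>1$ is the first or second element of a triple in $T'$, $J$ is the head of a different triple in $T'$; its indicator vector has $\hat v_t=1$ iff $t\in T$. $\mathrm{D}(\hat v)$: maximize $-\sum_{t\in\mathcal T}[(1-\hat v_t)(\lambda_{t,1}+\lambda_{t,2})+(2-\hat v_t)\lambda_{t,3}]-\sum_{J\in\mathcal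 N}\mu_J$ over $\lambda\ge0,\mu\ge0$ subject to, for every $J\in\mathcal N$, $\beta_J+\sum_{t:\mathsf{tail1}(t)=J}(-\lambda_{t,1}+\lambda_{t,3})+\sum_{t:\mathsf{tail2}(t)=J}(-\lambda_{t,2}+\lambda_{t,3})+\sum_{t:\mathsf{head}(t)=J}(\lambda_{t,1}+\lambda_{t,2}-\lambda_{t,3})+\mu_J\ge0$. *)

From HB Require Import structures.
From mathcomp Require Import all_boot all_order all_algebra.
From mathcomp Require Import reals.
Set Implicit Arguments. Unset Strict Implicit. Unset Printing Implicit Defensive.
Import Order.TTheory GRing.Theory Num.Theory.
Local Open Scope ring_scope.

(* Data of a multilinear program: [n] = 'I_n, index sets J_i (i < m),
   coefficients alpha_i.  *)

Definition Nset (n m : nat) (Js : 'I_m -> {set 'I_n}) : {set {set 'I_n}} :=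
  [set J | (J != set0) && [exists i, J \subset Js i]].

Definition node (n m : nat) (Js : 'I_m -> {set 'I_n}) :=
  {J : {set 'I_n} | J \in Nset Js}.

Definition beta (R : pzRingType) (n m : nat) (alpha : 'I_m -> R)
  (Js : 'I_m -> {set 'I_n}) (J : {set 'I_n}) : R :=
  \sum_(i < m | Js i == J) alpha i.

Fixpoint lex_lt (s t : seq nat) : bool :=
  match s, t with
  | [::], _ :: _ => true
  | x :: s', y :: t' => (x < y)%N || ((x == y) && lex_lt s' t')
  | _, _ => false
  end.

Definition set_seq (n : nat) (J : {set 'I_n}) : seq nat :=
  sort leq [seq val i | i <- enum J].

Definition set_lex_lt (n : nat) (J J' : {set 'I_n}) : bool :=
  lex_lt (set_seq J) (set_seq J').

(* (J, J') represents the triple (J, J', J u J'). *)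
Definition is_triple (n m : nat) (Js : 'I_m -> {set 'I_n})
  (p : {set 'I_n} * {set 'I_n}) : bool :=
  [&& (p.1 :|: p.2) \in Nset Js, (1 < #|p.1 :|: p.2|)%N,
      p.1 != set0, p.2 != set0, [disjoint p.1 & p.2] &
      set_lex_lt p.1 p.2].

Definition triple (n m : nat) (Js : 'I_m -> {set 'I_n}) :=
  {p : {set 'I_n} * {set 'I_n} | is_triple Js p}.

Definition tail1 n m (Js : 'I_m -> {set 'I_n}) (t : triple Js) : {set 'I_n} :=
  (val t).1.
Definition tail2 n m (Js : 'I_m -> {set 'I_n}) (t : triple Js) : {set 'I_n} :=
  (val t).2.
Definition head n m (Js : 'I_m -> {set 'I_n}) (t : triple Js) : {set 'I_n} :=
  (val t).1 :|: (val t).2.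

Definition proper_triple_set n m (Js : 'I_m -> {set 'I_n})
  (T : {set triple Js}) : Prop :=
  exists T' : {set triple Js}, T' \subset T /\
    (forall i : 'I_m, (1 < #|Js i|)%N ->
       exists2 t, t \in T' & head t = Js i) /\
    (forall t, t \in T' -> forall J : {set 'I_n},
       (J = tail1 t \/ J = tail2 t) -> (1 < #|J|)%N ->
       exists2 t', (t' \in T') && (t' != t) & head t' = J).

Definition indicator (R : pzRingType) n m (Js : 'I_m -> {set 'I_n})
  (T : {set triple Js}) : triple Js -> R :=
  fun t => (t \in T)%:R.

(* The linear program D(vhat).  lam t j, j : 'I_3, stands for
   lambda_{t,j+1}. *)
Definition D_obj (R : realType) n m (Js : 'I_m -> {set 'I_n})
  (vhat : triple Js -> R) (lam : triple Js -> 'I_3 -> R) (mu : node Js -> R) : R :=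
  - (\sum_(t : triple Js)
        ((1 - vhat t) * (lam t 0 + lam t 1) + (2 - vhat t) * lam t 2))
  - \sum_(J : node Js) mu J.

Definition D_feasible (R : realType) n m (alpha : 'I_m -> R)
  (Js : 'I_m -> {set 'I_n})
  (lam : triple Js -> 'I_3 -> R) (mu : node Js -> R) : Prop :=
  (forall t j, 0 <= lam t j) /\ (forall J, 0 <= mu J) /\
  (forall J : node Js,
     0 <= beta alpha Js (val J)
          + (\sum_(t : triple Js | tail1 t == val J) (- lam t 0 + lam t 2))
          + (\sum_(t : triple Js | tail2 t == val J) (- lam t 1 + lam t 2))
          + (\sum_(t : triple Js | head t == val J)
               (lam t 0 + lam t 1 - lam t 2))
          + mu J).

Definition D_optimal (R : realType) n m (alpha : 'I_m -> R)
  (Js : 'I_m -> {set 'I_n}) (vhat : triple Js -> R)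
  (lam : triple Js -> 'I_3 -> R) (mu : node Js -> R) : Prop :=
  D_feasible alpha lam mu /\
  forall lam' mu', D_feasible alpha lam' mu' ->
    D_obj vhat lam' mu' <= D_obj vhat lam mu.

(* Testing the dual solution lambda = 0, mu_J = |beta_J| against an optimal one shows that
   sum_t lambda_{t,3} + sum_J mu_J <= C := sum_J |beta_J|, since every coefficient of the
   objective is nonnegative and that of lambda_{t,3} is at least 1.  This bounds mu and
   lambda_{.,3}.  The constraint at J then bounds the lambda_{.,1}, lambda_{.,2} mass carried
   by triples with tail J by 4 C plus the mass carried by triples with head J; as the tails
   of a triple are strictly smaller than its head, induction on |J| bounds it by a constant. *)
From Pilot Require Import Defs.
From HB Require Import structures.
From mathcomp Require Import all_boot all_order all_algebra.
From mathcomp Require Import reals lra.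
Set Implicit Arguments. Unset Strict Implicit. Unset Printing Implicit Defensive.
Import Order.TTheory GRing.Theory Num.Theory.
Local Open Scope ring_scope.

Section SubSums.
Variables (R : numDomainType) (I : finType).
Implicit Types (P Q : pred I) (F : I -> R).

Lemma ler_sum_subset P Q F :
  (forall i, P i -> Q i) -> (forall i, Q i -> 0 <= F i) ->
  \sum_(i | P i) F i <= \sum_(i | Q i) F i.
Proof.
move=> PQ F_ge0; rewrite [leRHS](bigID P) /=.
rewrite (eq_bigl P) => [|i]; last exact/andb_idl/PQ.
by rewrite lerDl sumr_ge0 // => i /andP [/F_ge0].
Qed.

Lemma ler_sum_term Q F i0 :
  Q i0 -> (forall i, Q i -> 0 <= F i) -> F i0 <= \sum_(i | Q i) F i.
Proof.
move=> Qi0 F_ge0; apply: le_trans (ler_sum_subset (P := pred1 i0) _ F_ge0).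
  by rewrite big_pred1_eq.
by move=> i /eqP ->.
Qed.

End SubSums.

Section Triples.
Variables (n m : nat) (Js : 'I_m -> {set 'I_n}).

Lemma Nset_subset (J J' : {set 'I_n}) :
  J != set0 -> J \subset J' -> J' \in Nset Js -> J \in Nset Js.
Proof.
move=> J_ne0 JJ'; rewrite !inE J_ne0 => /andP [_ /existsP [i J'i]].
by apply/existsP; exists i; apply: subset_trans J'i.
Qed.

Lemma tail1_in_Nset (t : triple Js) : tail1 t \in Nset Js.
Proof.
have /and5P [head_in _ t1_ne0 _ _] := valP t.
exact: Nset_subset t1_ne0 (subsetUl _ _) head_in.
Qed.

Lemma tail2_in_Nset (t : triple Js) : tail2 t \in Nset Js.
Proof.
have /and5P [head_in _ _ t2_ne0 _] := valP t.
exact: Nset_subset t2_ne0 (subsetUr _ _) head_in.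
Qed.

Lemma card_tail1_lt (t : triple Js) : (#|tail1 t| < #|Defs.head t|)%N.
Proof.
have /and5P [_ _ _ t2_ne0 /andP [dis _]] := valP t.
apply/proper_card/properUl; apply: contra t2_ne0 => sub.
by rewrite -(setIidPr sub) (disjoint_setI0 dis).
Qed.

Lemma card_tail2_lt (t : triple Js) : (#|tail2 t| < #|Defs.head t|)%N.
Proof.
have /and5P [_ _ t1_ne0 _ /andP [dis _]] := valP t.
apply/proper_card/properUr; apply: contra t1_ne0 => sub.
by rewrite -(setIidPl sub) (disjoint_setI0 dis).
Qed.

End Triples.

Section DualBounds.
Variables (R : realType) (n m : nat) (alpha : 'I_m -> R) (Js : 'I_m -> {set 'I_n}).
Implicit Types (vhat : triple Js -> R) (lam : triple Js -> 'I_3 -> R) (mu : node Js -> R).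

Definition beta_mass : R := \sum_(J : node Js) `|beta alpha Js (val J)|.

Lemma beta_mass_ge0 : 0 <= beta_mass.
Proof. exact: sumr_ge0. Qed.

Lemma norm_beta_le_mass (J : node Js) : `|beta alpha Js (val J)| <= beta_mass.
Proof. exact: ler_sum_term. Qed.

Lemma D_feasible_trivial :
  D_feasible alpha (fun (_ : triple Js) _ => 0) (fun J : node Js => `|beta alpha Js (val J)|).
Proof.
split=> //; split=> // J.
rewrite !big1 => [|t _|t _|t _]; rewrite ?subr0 ?addr0 ?oppr0 //.
by have := ler_norm (- beta alpha Js (val J)); rewrite normrN; lra.
Qed.

Lemma D_obj_trivial vhat :
  D_obj vhat (fun _ _ => 0) (fun J => `|beta alpha Js (val J)|) = - beta_mass.
Proof. by rewrite /D_obj big1 ?oppr0 ?sub0r // => t _; rewrite addr0 !mulr0 addr0. Qed.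

Lemma indicator_le1 (T : {set triple Js}) t : indicator R T t <= 1.
Proof. by rewrite /indicator; case: (t \in T). Qed.

Lemma D_obj_le_mass vhat lam mu :
  (forall t, vhat t <= 1) -> (forall t j, 0 <= lam t j) ->
  \sum_t lam t 2 + \sum_J mu J <= - D_obj vhat lam mu.
Proof.
move=> vhat_le1 lam_ge0; rewrite /D_obj opprB opprK addrC lerD2l.
apply: ler_sum => t _.
have := vhat_le1 t; have := lam_ge0 t 0; have := lam_ge0 t 1; have := lam_ge0 t 2.
nra.
Qed.

Lemma D_optimal_mass_le vhat lam mu :
  (forall t, vhat t <= 1) -> D_optimal alpha vhat lam mu ->
  \sum_t lam t 2 + \sum_J mu J <= beta_mass.
Proof.
move=> vhat_le1 [[lam_ge0 _] opt]; have := opt _ _ D_feasible_trivial.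
rewrite D_obj_trivial -lerN2 opprK; apply: le_trans.
exact: D_obj_le_mass.
Qed.

Definition tail_load lam (J : {set 'I_n}) : R :=
  \sum_(t | tail1 t == J) lam t 0 + \sum_(t | tail2 t == J) lam t 1.

Fixpoint load_bound (k : nat) : R :=
  if k is k'.+1 then 4 * beta_mass + #|{: triple Js}|%:R * (2 * load_bound k') else 0.

Lemma load_bound_ge0 k : 0 <= load_bound k.
Proof.
have := beta_mass_ge0; elim: k => //= k IH mass_ge0.
by rewrite addr_ge0 ?mulr_ge0 ?IH ?ler0n //; lra.
Qed.

Section FeasibleBounds.
Variables (lam : triple Js -> 'I_3 -> R) (mu : node Js -> R).
Hypothesis lam_mu_feasible : D_feasible alpha lam mu.
Hypothesis mass_le : \sum_t lam t 2 + \sum_J mu J <= beta_mass.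

Let lam_ge0 : forall t j, 0 <= lam t j := lam_mu_feasible.1.
Let mu_ge0 : forall J, 0 <= mu J := lam_mu_feasible.2.1.

Lemma mu_le_mass J : mu J <= beta_mass.
Proof.
apply: le_trans (ler_sum_term (Q := xpredT) (i0 := J) isT (fun J _ => mu_ge0 J)) _.
by apply: le_trans mass_le; rewrite lerDr sumr_ge0.
Qed.

Lemma sum_lam2_le_mass (P : pred (triple Js)) : \sum_(t | P t) lam t 2 <= beta_mass.
Proof.
apply: le_trans (ler_sum_subset (Q := xpredT) (fun _ _ => isT) (fun t _ => lam_ge0 t 2)) _.
by apply: le_trans mass_le; rewrite lerDl sumr_ge0.
Qed.

Lemma lam0_le_tail_load t : lam t 0 <= tail_load lam (tail1 t).
Proof.
have := ler_sum_term (Q := fun t' => tail1 t' == tail1 t) (F := lam^~ 0) (i0 := t)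
  (eqxx _) (fun t' _ => lam_ge0 t' 0).
have : 0 <= \sum_(t' | tail2 t' == tail1 t) lam t' 1 by exact: sumr_ge0.
rewrite /tail_load; lra.
Qed.

Lemma lam1_le_tail_load t : lam t 1 <= tail_load lam (tail2 t).
Proof.
have := ler_sum_term (Q := fun t' => tail2 t' == tail2 t) (F := lam^~ 1) (i0 := t)
  (eqxx _) (fun t' _ => lam_ge0 t' 1).
have : 0 <= \sum_(t' | tail1 t' == tail2 t) lam t' 0 by exact: sumr_ge0.
rewrite /tail_load; lra.
Qed.

(* The dual constraint at J, with |beta_J|, mu_J and both lambda_{.,3} sums bounded by the mass. *)
Lemma tail_load_le_head_load J : J \in Nset Js ->
  tail_load lam J <= 4 * beta_mass + \sum_(t | Defs.head t == J) (lam t 0 + lam t 1).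
Proof.
move=> J_in; have := lam_mu_feasible.2.2 (Sub J J_in); rewrite SubK.
have := norm_beta_le_mass (Sub J J_in); rewrite SubK.
have := ler_norm (beta alpha Js J); have := mu_le_mass (Sub J J_in).
have := sum_lam2_le_mass (fun t => tail1 t == J).
have := sum_lam2_le_mass (fun t => tail2 t == J).
have : 0 <= \sum_(t | Defs.head t == J) lam t 2 by exact: sumr_ge0.
rewrite /tail_load !big_split /= !sumrN; lra.
Qed.

Lemma tail_load_le_bound k J : J \in Nset Js -> (#|J| <= k)%N ->
  tail_load lam J <= load_bound k.
Proof.
elim: k J => [|k IH] J J_in J_le.
  by move: J_in; rewrite inE -card_gt0 lt0n -leqn0 J_le.
apply: le_trans (tail_load_le_head_load J_in) _; rewrite /= lerD2l.
have bound_ge0 := load_bound_ge0 k.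
apply: (@le_trans _ _ (\sum_(t | Defs.head t == J) 2 * load_bound k)).
  apply: ler_sum => t /eqP head_t; rewrite -head_t in J_le.
  have := IH _ (tail1_in_Nset t) (leq_trans (card_tail1_lt t) J_le).
  have := IH _ (tail2_in_Nset t) (leq_trans (card_tail2_lt t) J_le).
  have := lam0_le_tail_load t; have := lam1_le_tail_load t.
  lra.
apply: le_trans (ler_sum_subset (Q := xpredT) _ _) _ => //; first by move=> *; lra.
by rewrite sumr_const [leRHS]mulr_natl.
Qed.

Lemma lam_le_bound t j : lam t j <= beta_mass + load_bound n.
Proof.
have card_le_n (J : {set 'I_n}) : (#|J| <= n)%N by rewrite -[leqRHS]card_ord max_card.
have := beta_mass_ge0; have := load_bound_ge0 n.
have [->|[->|->]] : j = 0 \/ j = 1 \/ j = 2.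
  by case: j => -[|[|[|//]]] hj; [left|right; left|right; right]; exact: val_inj.
- have := lam0_le_tail_load t; have := tail_load_le_bound (tail1_in_Nset t) (card_le_n _).
  lra.
- have := lam1_le_tail_load t; have := tail_load_le_bound (tail2_in_Nset t) (card_le_n _).
  lra.
- have /= := ler_sum_term (Q := xpredT) (F := lam^~ 2) (i0 := t) isT (fun t' _ => lam_ge0 t' 2).
  by have := sum_lam2_le_mass xpredT; lra.
Qed.

End FeasibleBounds.

End DualBounds.

Theorem proposition3 (R : realType) (n m : nat) (alpha : 'I_m -> R)
  (Js : 'I_m -> {set 'I_n}) (HJs : forall i, Js i != set0) :
  exists (Mlam : triple Js -> 'I_3 -> R) (Mmu : node Js -> R),
    (forall t j, 0 <= Mlam t j) /\ (forall J, 0 <= Mmu J) /\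
    forall T : {set triple Js}, proper_triple_set T ->
    forall (lam : triple Js -> 'I_3 -> R) (mu : node Js -> R),
      D_optimal alpha (indicator R T) lam mu ->
      (forall t j, lam t j <= Mlam t j) /\ (forall J, mu J <= Mmu J).
Proof.
exists (fun _ _ => beta_mass alpha Js + load_bound alpha Js n), (fun _ => beta_mass alpha Js).
have mass_ge0 := beta_mass_ge0 alpha Js.
split; first by move=> t j; rewrite addr_ge0 ?load_bound_ge0.
split=> // T _ lam mu opt.
have mass_le := D_optimal_mass_le (indicator_le1 R T) opt.
split=> [t j|J]; [exact: lam_le_bound opt.1 mass_le t j | exact: mu_le_mass opt.1 mass_le J].
Qed.
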